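(* Let $(S,T,\alpha,\beta)$ be a matched product system of left inverse semi-braces such that the maps $r_S$ and $r_T$ associated to $S$ and $T$ are solutions. Then the map $r_{S\bowtie T}$ associated to the matched product $S\bowtie T$ is a solution, and it coincides with the matched product of solutions $r_S\bowtie r_T$, i.e. for all $(a,u),(b,v)\in S\times T$, $$r_{S\bowtie T}((a,u),(b,v))=\left(\left(\alpha_u\lambda_{\bar a}(b),\,\beta_a\lambda_{\bar u}(v)\right),\ \left(\alpha^{-1}_{\overline U}\rho_{\alpha_{\bar u}(b)}(a),\ \beta^{-1}_{\overline A}\rho_{\beta_{\bar a}(v)}(u)\right)\right),$$ where $\bar a=\alpha_u^{-1}(a)$, $\bar u=\beta_a^{-1}(u)$, $A=\alpha_u\lambda_{\bar a}(b)$, $U=\beta_a\lambda_{\bar u}(v)$, $\overline A=\alpha_U^{-1}(A)$, $\overline U=\beta_A^{-1}(U)$.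
   Context: An inverse semigroup is a semigroup $(S,\cdot)$ in which for each $a$ there is a unique $a^{-1}$ with $aa^{-1}a=a$, $a^{-1}aa^{-1}=a^{-1}$. A left inverse semi-brace is a triple $(S,+,\cdot)$ with $(S,+)$ a semigroup, $(S,\cdot)$ an inverse semigroup and $a(b+c)=ab+a(a^{-1}+c)$ for all $a,b,c$. In it set $\lambda_a(b)=a(a^{-1}+b)$, $\rho_b(a)=(a^{-1}+b)^{-1}b$; the map associated to $S$ is $r_S(a,b)=(\lambda_a(b),\rho_b(a))$. A solution is a map $r:X\times X\to X\times X$ with $(r\times\mathrm{id})(\mathrm{id}\times r)(r\times\mathrm{id})=(\mathrm{id}\times r)(r\times\mathrm{id})(\mathrm{id}\times r)$. A matched product system of left inverse semi-braces is a quadruple $(S,T,\alpha,\beta)$ where $S,T$ are left inverse semi-braces, $\alpha:T\to\mathrm{Aut}(S,+)$ is a homomorphism of inverse semigroups from $(T,\cdot)$ into the automorphism group of $(S,+)$, $\beta:S\to\mathrm{Aut}(T,+)$ is a homomorphism of inverse semigroups from $(S,\cdot)$ into the automorphism group of $(T,+)$ (write $\alpha_u=\alpha(u)$, $\beta_a=\beta(a)$, and $\alpha_u^{-1},\beta_a^{-1}$ for the inverse maps), such that for all $a,b\in S$, $u,v\in T$: $\alpha_u(\alpha_u^{-1}(a)\,b)=a\,\alpha_{\beta_a^{-1}(u)}(b)$ and $\beta_a(\beta_a^{-1}(u)\,v)=u\,\beta_{\alpha_u^{-1}(a)}(v)$; and if $\alpha_u(\alpha_u^{-1}(a)\,a)=a$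 and $\beta_a(\beta_a^{-1}(u)\,u)=u$, then $\alpha_u(a)=a$ and $\beta_a(u)=u$. The matched product $S\bowtie T$ is $S\times T$ with $(a,u)+(b,v)=(a+b,u+v)$ and $(a,u)(b,v)=(\alpha_u(\alpha_u^{-1}(a)b),\beta_a(\beta_a^{-1}(u)v))$; it is a left inverse semi-brace, and $r_{S\bowtie T}$ denotes its associated map. *)

Set Implicit Arguments.
Unset Strict Implicit.

Definition is_inverse_op (X : Type) (mul : X -> X -> X) (inv : X -> X) : Prop :=
  forall x, mul (mul x (inv x)) x = x /\ mul (mul (inv x) x) (inv x) = inv x.

Record lisb (S : Type) := LISB {
  sadd : S -> S -> S;
  smul : S -> S -> S;
  sinv : S -> S;
  sadd_assoc : forall a b c, sadd a (sadd b c) = sadd (sadd a b) c;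
  smul_assoc : forall a b c, smul a (smul b c) = smul (smul a b) c;
  sinv_spec : is_inverse_op smul sinv;
  sinv_unique : forall a b, smul (smul a b) a = a -> smul (smul b a) b = b -> b = sinv a;
  sbrace : forall a b c, smul a (sadd b c) = sadd (smul a b) (smul a (sadd (sinv a) c))
}.

Definition lam_g (X : Type) (add mul : X -> X -> X) (inv : X -> X) (a b : X) : X :=
  mul a (add (inv a) b).
Definition rho_g (X : Type) (add mul : X -> X -> X) (inv : X -> X) (b a : X) : X :=
  mul (inv (add (inv a) b)) b.
Definition rmap_g (X : Type) (add mul : X -> X -> X) (inv : X -> X) (p : X * X) : X * X :=
  (lam_g add mul inv (fst p) (snd p), rho_g add mul inv (snd p) (fst p)).

Definition lamB S (B : lisb S) := lam_g (sadd B) (smul B) (sinv B).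
Definition rhoB S (B : lisb S) := rho_g (sadd B) (smul B) (sinv B).
Definition rB S (B : lisb S) := rmap_g (sadd B) (smul B) (sinv B).

Definition r12 X (r : X * X -> X * X) (t : X * X * X) : X * X * X :=
  let '(x, y, z) := t in let '(x', y') := r (x, y) in (x', y', z).
Definition r23 X (r : X * X -> X * X) (t : X * X * X) : X * X * X :=
  let '(x, y, z) := t in let '(y', z') := r (y, z) in (x, y', z').
Definition is_solution X (r : X * X -> X * X) : Prop :=
  forall t, r12 r (r23 r (r12 r t)) = r23 r (r12 r (r23 r t)).

Definition is_add_aut S (add : S -> S -> S) (f finv : S -> S) : Prop :=
  (forall x, f (finv x) = x) /\ (forall x, finv (f x) = x) /\
  (forall x y, f (add x y) = add (f x) (f y)).

Record mps S T (BS : lisb S) (BT : lisb T) := MPS {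
  alpha : T -> S -> S;
  alpha_inv : T -> S -> S;
  beta : S -> T -> T;
  beta_inv : S -> T -> T;
  alpha_aut : forall u, is_add_aut (sadd BS) (alpha u) (alpha_inv u);
  beta_aut : forall a, is_add_aut (sadd BT) (beta a) (beta_inv a);
  alpha_hom : forall u v x, alpha (smul BT u v) x = alpha u (alpha v x);
  beta_hom : forall a b y, beta (smul BS a b) y = beta a (beta b y);
  mps_cond1 : forall a b u,
    alpha u (smul BS (alpha_inv u a) b) = smul BS a (alpha (beta_inv a u) b);
  mps_cond2 : forall a u v,
    beta a (smul BT (beta_inv a u) v) = smul BT u (beta (alpha_inv u a) v);
  mps_cond3 : forall a u,
    alpha u (smul BS (alpha_inv u a) a) = a ->
    beta a (smul BT (beta_inv a u) u) = u ->
    alpha u a = a /\ beta a u = u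
}.

Definition mp_add S T (BS : lisb S) (BT : lisb T) (x y : S * T) : S * T :=
  (sadd BS (fst x) (fst y), sadd BT (snd x) (snd y)).
Definition mp_mul S T (BS : lisb S) (BT : lisb T) (M : mps BS BT) (x y : S * T) : S * T :=
  (alpha M (snd x) (smul BS (alpha_inv M (snd x) (fst x)) (fst y)),
   beta M (fst x) (smul BT (beta_inv M (fst x) (snd x)) (snd y))).


(* The element (ā⁻¹, ū⁻¹), where ā = α_u⁻¹(a) and ū = β_a⁻¹(u), is an inverse of (a, u) in S ⋈ T,
   and it is the only one: the idempotents of S ⋈ T are the pairs of idempotents, so they commute.
   Evaluating λ and ρ of S ⋈ T at this inverse gives the formula r_S ⋈ r_T.

   For the braid equation, the product reads (a, u)(b, v) = (a b', u v') with
   (b', v') = τ_(a,u)(b, v) := (α_ū(b), β_ā(v)). The map Φ(x, y, z) = (x, τ_x(y), τ_(xy)(z)) on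
   (S × T)³ is injective and turns r_(S⋈T) acting on two adjacent factors into the componentwise
   map r_S × r_T acting on the same factors; the latter is a solution, hence so is r_(S⋈T). *)

Definition idempotent {X : Type} (mul : X -> X -> X) (e : X) : Prop := mul e e = e.

Definition inverse_semigroup {X : Type} (mul : X -> X -> X) (inv : X -> X) : Prop :=
  (forall a b c, mul a (mul b c) = mul (mul a b) c) /\
  is_inverse_op mul inv /\
  (forall a b, mul (mul a b) a = a -> mul (mul b a) b = b -> b = inv a).

Section InverseSemigroup.
Context {X : Type} {mul : X -> X -> X} {inv : X -> X}.
Hypothesis ISG : inverse_semigroup mul inv.
Local Infix "·" := mul (at level 40, left associativity).

Let mulA : forall a b c, a · (b · c) = a · b · c := proj1 ISG.
Let inv_unique : forall a b, a · b · a = a -> b · a · b = b -> b = inv a := proj2 (proj2 ISG).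
Local Ltac by_assoc := repeat rewrite <- mulA; reflexivity.

Lemma mul_inv_mul x : x · inv x · x = x.
Proof. exact (proj1 (proj1 (proj2 ISG) x)). Qed.

Lemma inv_mul_inv x : inv x · x · inv x = inv x.
Proof. exact (proj2 (proj1 (proj2 ISG) x)). Qed.

Lemma inv_involutive x : inv (inv x) = x.
Proof. symmetry. apply inv_unique; [apply inv_mul_inv | apply mul_inv_mul]. Qed.

Lemma idempotent_inv e : idempotent mul e -> inv e = e.
Proof. intro He. symmetry. apply inv_unique; rewrite !He; reflexivity. Qed.

Lemma mul_inv_idempotent x : idempotent mul (x · inv x).
Proof. unfold idempotent. rewrite mulA, mul_inv_mul. reflexivity. Qed.

Lemma inv_mul_idempotent x : idempotent mul (inv x · x).
Proof. unfold idempotent. rewrite mulA, inv_mul_inv. reflexivity. Qed.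

(* [f (ef)^-1 e] is also an inverse of [ef], hence equals [(ef)^-1], which is thus idempotent. *)
Lemma idempotent_mul e f : idempotent mul e -> idempotent mul f -> idempotent mul (e · f).
Proof.
  intros He Hf. set (x := inv (e · f)).
  assert (Hx1 : e · f · x · (e · f) = e · f) by apply mul_inv_mul.
  assert (Hx2 : x · (e · f) · x = x) by apply inv_mul_inv.
  assert (Hfxe : f · x · e = x).
  { apply inv_unique.
    - transitivity (e · (f · f) · x · (e · e) · f); [by_assoc|].
      rewrite He, Hf. transitivity (e · f · x · (e · f)); [by_assoc|]. exact Hx1.
    - transitivity (f · x · (e · e) · (f · f) · x · e); [by_assoc|].
      rewrite He, Hf. transitivity (f · (x · (e · f) · x) · e); [by_assoc|].
      rewrite Hx2. reflexivity. }
  assert (Hxx : idempotent mul x).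
  { unfold idempotent. transitivity (f · x · e · (f · x · e)); [rewrite Hfxe; reflexivity|].
    transitivity (f · (x · (e · f) · x) · e); [by_assoc|]. rewrite Hx2. exact Hfxe. }
  unfold idempotent. rewrite <- (inv_involutive (e · f)). fold x.
  rewrite (idempotent_inv _ Hxx). exact Hxx.
Qed.

Lemma idempotents_commute e f : idempotent mul e -> idempotent mul f -> e · f = f · e.
Proof.
  intros He Hf.
  assert (Hef := idempotent_mul _ _ He Hf). assert (Hfe := idempotent_mul _ _ Hf He).
  rewrite <- (idempotent_inv _ Hef). symmetry. apply inv_unique.
  - transitivity (e · (f · f) · (e · e) · f); [by_assoc|].
    rewrite He, Hf. transitivity (e · f · (e · f)); [by_assoc|]. exact Hef.
  - transitivity (f · (e · e) · (f · f) · e); [by_assoc|].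
    rewrite He, Hf. transitivity (f · e · (f · e)); [by_assoc|]. exact Hfe.
Qed.

End InverseSemigroup.

Section UniqueInverse.
Context {X : Type} {mul : X -> X -> X}.
Local Infix "·" := mul (at level 40, left associativity).
Hypothesis mulA : forall a b c, a · (b · c) = a · b · c.
Hypothesis idempotents_commute :
  forall e f, idempotent mul e -> idempotent mul f -> e · f = f · e.
Local Ltac by_assoc := repeat rewrite <- mulA; reflexivity.

Lemma inverse_unique p q r :
  p · q · p = p -> q · p · q = q -> p · r · p = p -> r · p · r = r -> q = r.
Proof.
  intros Hpqp Hqpq Hprp Hrpr.
  assert (Ipq : idempotent mul (p · q)) by (unfold idempotent; rewrite mulA, Hpqp; reflexivity).
  assert (Iqp : idempotent mul (q · p)) by (unfold idempotent; rewrite mulA, Hqpq; reflexivity).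
  assert (Ipr : idempotent mul (p · r)) by (unfold idempotent; rewrite mulA, Hprp; reflexivity).
  assert (Irp : idempotent mul (r · p)) by (unfold idempotent; rewrite mulA, Hrpr; reflexivity).
  transitivity (r · p · q).
  - transitivity (q · (p · r · p) · q); [rewrite Hprp, Hqpq; reflexivity|].
    transitivity (q · p · (r · p) · q); [by_assoc|].
    rewrite (idempotents_commute _ _ Iqp Irp).
    transitivity (r · (p · q · p) · q); [by_assoc|]. rewrite Hpqp. reflexivity.
  - symmetry. transitivity (r · (p · q · p) · r); [rewrite Hpqp, Hrpr; reflexivity|].
    transitivity (r · (p · q · (p · r))); [by_assoc|].
    rewrite (idempotents_commute _ _ Ipq Ipr).
    transitivity (r · p · r · p · q); [by_assoc|]. rewrite Hrpr. reflexivity.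
Qed.

End UniqueInverse.

Lemma r12_eq {X : Type} (r : X * X -> X * X) x y z :
  r12 r (x, y, z) = (fst (r (x, y)), snd (r (x, y)), z).
Proof. unfold r12. destruct (r (x, y)). reflexivity. Qed.

Lemma r23_eq {X : Type} (r : X * X -> X * X) x y z :
  r23 r (x, y, z) = (x, fst (r (y, z)), snd (r (y, z))).
Proof. unfold r23. destruct (r (y, z)). reflexivity. Qed.

Lemma is_solution_ext {X : Type} (r r' : X * X -> X * X) :
  (forall p, r p = r' p) -> is_solution r' -> is_solution r.
Proof.
  intros Hrr' Hr' t.
  assert (H12 : forall t, r12 r t = r12 r' t)
    by (intros [[x y] z]; rewrite !r12_eq, Hrr'; reflexivity).
  assert (H23 : forall t, r23 r t = r23 r' t)
    by (intros [[x y] z]; rewrite !r23_eq, Hrr'; reflexivity).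
  rewrite !H12, !H23. apply Hr'.
Qed.

Lemma is_solution_intertwined {X Y : Type}
  (r : X * X -> X * X) (s : Y * Y -> Y * Y) (phi : X * X * X -> Y * Y * Y) :
  (forall t t', phi t = phi t' -> t = t') ->
  (forall t, phi (r12 r t) = r12 s (phi t)) ->
  (forall t, phi (r23 r t) = r23 s (phi t)) ->
  is_solution s -> is_solution r.
Proof.
  intros Hinj H12 H23 Hs t. apply Hinj.
  repeat (rewrite H12 || rewrite H23). apply Hs.
Qed.

Definition prod_rmap {X Y : Type} (r1 : X * X -> X * X) (r2 : Y * Y -> Y * Y)
  (t : (X * Y) * (X * Y)) : (X * Y) * (X * Y) :=
  let '((a, u), (b, v)) := t in
  ((fst (r1 (a, b)), fst (r2 (u, v))), (snd (r1 (a, b)), snd (r2 (u, v)))).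

Lemma prod_rmap_solution {X Y : Type} (r1 : X * X -> X * X) (r2 : Y * Y -> Y * Y) :
  is_solution r1 -> is_solution r2 -> is_solution (prod_rmap r1 r2).
Proof.
  intros H1 H2 [[[a u] [b v]] [c w]].
  specialize (H1 (a, b, c)). specialize (H2 (u, v, w)).
  repeat (rewrite r12_eq in H1 || rewrite r23_eq in H1).
  repeat (rewrite r12_eq in H2 || rewrite r23_eq in H2).
  injection H1 as E1 E2 E3. injection H2 as F1 F2 F3.
  repeat (rewrite r12_eq || rewrite r23_eq). cbn [prod_rmap fst snd].
  rewrite E1, E2, E3, F1, F2, F3. reflexivity.
Qed.

Lemma lisb_inverse_semigroup {S : Type} (B : lisb S) : inverse_semigroup (smul B) (sinv B).
Proof. exact (conj (smul_assoc B) (conj (sinv_spec B) (@sinv_unique _ B))). Qed.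

(* The axioms of a matched product system are symmetric under exchanging [S] and [T]; every
   statement about [alpha] below therefore yields its mirror image about [beta]. *)
Definition mps_swap {S T : Type} {BS : lisb S} {BT : lisb T} (M : mps BS BT) : mps BT BS :=
  {| alpha := beta M; alpha_inv := beta_inv M; beta := alpha M; beta_inv := alpha_inv M;
     alpha_aut := beta_aut M; beta_aut := alpha_aut M;
     alpha_hom := beta_hom M; beta_hom := alpha_hom M;
     mps_cond1 := fun a b u => mps_cond2 M u a b;
     mps_cond2 := fun a u v => mps_cond1 M u v a;
     mps_cond3 := fun a u Hu Ha =>
       let (Hua, Hau) := @mps_cond3 _ _ _ _ M u a Ha Hu in conj Hau Hua |}.

Section Action.
Context {S T : Type} {BS : lisb S} {BT : lisb T} (M : mps BS BT).

Lemma alpha_alpha_inv u x : alpha M u (alpha_inv M u x) = x.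
Proof. exact (proj1 (alpha_aut M u) x). Qed.

Lemma alpha_inv_alpha u x : alpha_inv M u (alpha M u x) = x.
Proof. exact (proj1 (proj2 (alpha_aut M u)) x). Qed.

Lemma alpha_sadd u x y : alpha M u (sadd BS x y) = sadd BS (alpha M u x) (alpha M u y).
Proof. exact (proj2 (proj2 (alpha_aut M u)) x y). Qed.

Lemma alpha_inj u x y : alpha M u x = alpha M u y -> x = y.
Proof. intro H. rewrite <- (alpha_inv_alpha u x), H. apply alpha_inv_alpha. Qed.

Lemma alpha_idempotent_id f x : idempotent (smul BT) f -> alpha M f x = x.
Proof. intro Hf. apply (alpha_inj f). rewrite <- alpha_hom, Hf. reflexivity. Qed.

Lemma alpha_inv_sinv u x : alpha_inv M u x = alpha M (sinv BT u) x.
Proof.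
  assert (Hcancel : forall y, alpha M (sinv BT u) (alpha M u y) = y).
  { intro y. apply (alpha_inj u).
    rewrite <- !alpha_hom, (mul_inv_mul (lisb_inverse_semigroup BT)). reflexivity. }
  rewrite <- (Hcancel (alpha_inv M u x)), alpha_alpha_inv. reflexivity.
Qed.

Lemma alpha_inv_smul_index u v x :
  alpha_inv M (smul BT u v) x = alpha_inv M v (alpha_inv M u x).
Proof.
  apply (alpha_inj (smul BT u v)). rewrite alpha_alpha_inv, alpha_hom, !alpha_alpha_inv.
  reflexivity.
Qed.

Lemma alpha_inv_idempotent_id f x : idempotent (smul BT) f -> alpha_inv M f x = x.
Proof.
  intro Hf. rewrite alpha_inv_sinv, (idempotent_inv (lisb_inverse_semigroup BT) _ Hf).
  apply alpha_idempotent_id, Hf.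
Qed.

End Action.

Section ActionMirror.
Context {S T : Type} {BS : lisb S} {BT : lisb T} (M : mps BS BT).

Lemma beta_beta_inv a y : beta M a (beta_inv M a y) = y.
Proof. exact (alpha_alpha_inv (mps_swap M) a y). Qed.

Lemma beta_inv_beta a y : beta_inv M a (beta M a y) = y.
Proof. exact (alpha_inv_alpha (mps_swap M) a y). Qed.

Lemma beta_idempotent_id e y : idempotent (smul BS) e -> beta M e y = y.
Proof. exact (alpha_idempotent_id (mps_swap M) e y). Qed.

Lemma beta_inj a y z : beta M a y = beta M a z -> y = z.
Proof. exact (alpha_inj (mps_swap M) a y z). Qed.

Lemma beta_inv_idempotent_id e y : idempotent (smul BS) e -> beta_inv M e y = y.
Proof. exact (alpha_inv_idempotent_id (mps_swap M) e y). Qed.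

Lemma beta_inv_smul_index a b y : beta_inv M (smul BS a b) y = beta_inv M b (beta_inv M a y).
Proof. exact (alpha_inv_smul_index (mps_swap M) a b y). Qed.

Lemma beta_inv_sinv a y : beta_inv M a y = beta M (sinv BS a) y.
Proof. exact (alpha_inv_sinv (mps_swap M) a y). Qed.

End ActionMirror.

Section TwistedHomomorphism.
Context {S T : Type} {BS : lisb S} {BT : lisb T} (M : mps BS BT).
Let ISG_S := lisb_inverse_semigroup BS.

Lemma alpha_smul u x y :
  alpha M u (smul BS x y) = smul BS (alpha M u x) (alpha M (beta_inv M (alpha M u x) u) y).
Proof. pose proof (mps_cond1 M (alpha M u x) y u) as H. rewrite alpha_inv_alpha in H. exact H. Qed.

Lemma alpha_inv_smul u x y :
  alpha_inv M u (smul BS x y) = smul BS (alpha_inv M u x) (alpha_inv M (beta_inv M x u) y).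
Proof. apply (alpha_inj M u). rewrite alpha_alpha_inv, mps_cond1, alpha_alpha_inv. reflexivity. Qed.

Lemma alpha_smul_idempotent_l u e c : idempotent (smul BS) e ->
  alpha M u (smul BS e c) = smul BS (alpha M u e) (alpha M u c).
Proof.
  intro He. pose proof (mps_cond1 M e (alpha M u c) (sinv BT u)) as H.
  rewrite (beta_inv_idempotent_id M _ _ He), alpha_inv_sinv,
    (inv_involutive (lisb_inverse_semigroup BT)), <- !alpha_inv_sinv, alpha_inv_alpha in H.
  rewrite <- H, alpha_alpha_inv. reflexivity.
Qed.

Lemma alpha_idempotent u e : idempotent (smul BS) e -> idempotent (smul BS) (alpha M u e).
Proof.
  intro He. unfold idempotent. rewrite <- alpha_smul_idempotent_l, He by exact He.
  reflexivity.
Qed.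

Lemma sinv_alpha u x :
  sinv BS (alpha M u x) = alpha M (beta_inv M (alpha M u x) u) (sinv BS x).
Proof.
  set (a := alpha M u x). set (s := beta_inv M a u). set (c := alpha M s (sinv BS x)).
  assert (Hac : smul BS a c = alpha M u (smul BS x (sinv BS x))) by (symmetry; apply alpha_smul).
  assert (Hs : beta_inv M c s = u).
  { unfold s. rewrite <- beta_inv_smul_index, Hac.
    apply beta_inv_idempotent_id, alpha_idempotent, (mul_inv_idempotent ISG_S). }
  symmetry. apply (@sinv_unique _ BS).
  - rewrite Hac. unfold a.
    rewrite <- alpha_smul_idempotent_l, (mul_inv_mul ISG_S) by apply (mul_inv_idempotent ISG_S).
    reflexivity.
  - rewrite <- smul_assoc, Hac.
    transitivity (alpha M s (smul BS (sinv BS x) (smul BS x (sinv BS x)))).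
    + rewrite (alpha_smul s). fold c. rewrite Hs. reflexivity.
    + rewrite smul_assoc, (inv_mul_inv ISG_S). reflexivity.
Qed.

End TwistedHomomorphism.

Section TwistedHomomorphismMirror.
Context {S T : Type} {BS : lisb S} {BT : lisb T} (M : mps BS BT).

Lemma beta_inv_smul a w y :
  beta_inv M a (smul BT w y) = smul BT (beta_inv M a w) (beta_inv M (alpha_inv M w a) y).
Proof. exact (alpha_inv_smul (mps_swap M) a w y). Qed.

Lemma beta_inv_idempotent a f : idempotent (smul BT) f -> idempotent (smul BT) (beta_inv M a f).
Proof. rewrite beta_inv_sinv. exact (alpha_idempotent (mps_swap M) (sinv BS a) f). Qed.

End TwistedHomomorphismMirror.

Section ProductComponents.
Context {S T : Type} {BS : lisb S} {BT : lisb T} (M : mps BS BT).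
Let ISG_S := lisb_inverse_semigroup BS.

Lemma mp_mul_eq a u b v :
  mp_mul M (a, u) (b, v) =
  (smul BS a (alpha M (beta_inv M a u) b), smul BT u (beta M (alpha_inv M u a) v)).
Proof. unfold mp_mul; simpl. rewrite mps_cond1, mps_cond2. reflexivity. Qed.

Lemma beta_inv_mp_mul a u b v :
  beta_inv M (smul BS a (alpha M (beta_inv M a u) b)) (smul BT u (beta M (alpha_inv M u a) v)) =
  smul BT (beta_inv M (alpha M (beta_inv M a u) b) (beta_inv M a u)) (beta_inv M b v).
Proof.
  rewrite <- (mps_cond2 M a u v), beta_inv_smul_index, beta_inv_beta, beta_inv_smul,
    alpha_inv_alpha.
  reflexivity.
Qed.

Lemma mp_mul_assoc_fst a u b v c w :
  fst (mp_mul M (a, u) (mp_mul M (b, v) (c, w))) =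
  fst (mp_mul M (mp_mul M (a, u) (b, v)) (c, w)).
Proof.
  rewrite !mp_mul_eq. simpl.
  rewrite beta_inv_mp_mul, alpha_hom, alpha_smul, smul_assoc. reflexivity.
Qed.

Lemma sinv_as_alpha a u :
  sinv BS a = alpha M (beta_inv M a u) (sinv BS (alpha_inv M u a)).
Proof.
  pose proof (sinv_alpha M u (alpha_inv M u a)) as H. rewrite alpha_alpha_inv in H. exact H.
Qed.

Definition mp_inv (p : S * T) : S * T :=
  (sinv BS (alpha_inv M (snd p) (fst p)), sinv BT (beta_inv M (fst p) (snd p))).

Lemma mp_mul_mp_inv_fst a u : fst (mp_mul M (a, u) (mp_inv (a, u))) = smul BS a (sinv BS a).
Proof.
  unfold mp_mul, mp_inv; simpl. rewrite alpha_smul, alpha_alpha_inv, <- sinv_as_alpha.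
  reflexivity.
Qed.

Lemma fst_mp_inv_mul p q :
  fst (mp_mul M (mp_inv p) q) =
  alpha_inv M (beta_inv M (fst p) (snd p)) (smul BS (sinv BS (fst p)) (fst q)).
Proof.
  destruct p as [a u]. unfold mp_mul, mp_inv; simpl.
  rewrite alpha_inv_sinv, (inv_involutive (lisb_inverse_semigroup BT)), <- sinv_as_alpha,
    <- alpha_inv_sinv.
  reflexivity.
Qed.

Lemma mp_inv_mul_fst a u :
  fst (mp_mul M (mp_inv (a, u)) (a, u)) =
  smul BS (sinv BS (alpha_inv M u a)) (alpha_inv M u a).
Proof.
  rewrite fst_mp_inv_mul; simpl. apply (alpha_inj M (beta_inv M a u)).
  rewrite alpha_alpha_inv, alpha_smul, <- sinv_as_alpha, <- beta_inv_smul_index,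
    beta_inv_idempotent_id, alpha_alpha_inv by apply (mul_inv_idempotent ISG_S).
  reflexivity.
Qed.

End ProductComponents.

Section ProductSemigroup.
Context {S T : Type} {BS : lisb S} {BT : lisb T} (M : mps BS BT).
Let ISG_S := lisb_inverse_semigroup BS.
Let ISG_T := lisb_inverse_semigroup BT.

Lemma mp_mul_assoc p q r : mp_mul M p (mp_mul M q r) = mp_mul M (mp_mul M p q) r.
Proof.
  destruct p as [a u], q as [b v], r as [c w]. apply injective_projections.
  - apply mp_mul_assoc_fst.
  - exact (mp_mul_assoc_fst (mps_swap M) u a v b w c).
Qed.

Lemma mp_mul_mp_inv p :
  mp_mul M p (mp_inv M p) =
  (smul BS (fst p) (sinv BS (fst p)), smul BT (snd p) (sinv BT (snd p))).
Proof.
  destruct p as [a u]. apply injective_projections.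
  - apply mp_mul_mp_inv_fst.
  - exact (mp_mul_mp_inv_fst (mps_swap M) u a).
Qed.

Lemma mp_inv_mul a u :
  mp_mul M (mp_inv M (a, u)) (a, u) =
  (smul BS (sinv BS (alpha_inv M u a)) (alpha_inv M u a),
   smul BT (sinv BT (beta_inv M a u)) (beta_inv M a u)).
Proof.
  apply injective_projections.
  - apply mp_inv_mul_fst.
  - exact (mp_inv_mul_fst (mps_swap M) u a).
Qed.

Lemma mp_mul_idempotent_l e f b v :
  idempotent (smul BS) e -> idempotent (smul BT) f ->
  mp_mul M (e, f) (b, v) = (smul BS e b, smul BT f v).
Proof.
  intros He Hf. unfold mp_mul; simpl.
  rewrite (alpha_inv_idempotent_id M _ _ Hf), (alpha_idempotent_id M _ _ Hf),
    (beta_inv_idempotent_id M _ _ He), (beta_idempotent_id M _ _ He).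
  reflexivity.
Qed.

Lemma mp_inv_spec : is_inverse_op (mp_mul M) (mp_inv M).
Proof.
  intros [a u]. split.
  - rewrite mp_mul_mp_inv, mp_mul_idempotent_l, (mul_inv_mul ISG_S), (mul_inv_mul ISG_T);
      [reflexivity | apply mul_inv_idempotent..]; assumption.
  - rewrite mp_inv_mul. unfold mp_inv; simpl.
    rewrite mp_mul_idempotent_l, (inv_mul_inv ISG_S), (inv_mul_inv ISG_T);
      [reflexivity | apply inv_mul_idempotent..]; assumption.
Qed.

(* The third axiom of a matched product system is needed exactly here. *)
Lemma mp_idempotent a u :
  idempotent (mp_mul M) (a, u) -> idempotent (smul BS) a /\ idempotent (smul BT) u.
Proof.
  intro H. unfold idempotent, mp_mul in H; simpl in H. injection H as Ha Hu.
  destruct (mps_cond3 Ha Hu) as [Hfixa Hfixu].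
  assert (Ea : alpha_inv M u a = a).
  { transitivity (alpha_inv M u (alpha M u a)); [rewrite Hfixa; reflexivity|].
    apply alpha_inv_alpha. }
  assert (Eu : beta_inv M a u = u).
  { transitivity (beta_inv M a (beta M a u)); [rewrite Hfixu; reflexivity|].
    apply beta_inv_beta. }
  rewrite Ea in Ha. rewrite Eu in Hu. split.
  - apply (alpha_inj M u). rewrite Ha, Hfixa. reflexivity.
  - apply (beta_inj M a). rewrite Hu, Hfixu. reflexivity.
Qed.

Lemma mp_idempotents_commute p q :
  idempotent (mp_mul M) p -> idempotent (mp_mul M) q -> mp_mul M p q = mp_mul M q p.
Proof.
  destruct p as [e f], q as [e' f']. intros Hp Hq.
  destruct (mp_idempotent _ _ Hp) as [He Hf]. destruct (mp_idempotent _ _ Hq) as [He' Hf'].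
  rewrite !mp_mul_idempotent_l by assumption.
  rewrite (idempotents_commute ISG_S _ _ He He'), (idempotents_commute ISG_T _ _ Hf Hf').
  reflexivity.
Qed.

Lemma mp_inverse_unique (pinv : S * T -> S * T) :
  is_inverse_op (mp_mul M) pinv -> forall p, pinv p = mp_inv M p.
Proof.
  intros Hinv p.
  destruct (Hinv p) as [H1 H2]. destruct (mp_inv_spec p) as [H3 H4].
  exact (inverse_unique mp_mul_assoc mp_idempotents_commute p _ _ H1 H2 H3 H4).
Qed.

End ProductSemigroup.

Section LambdaRho.
Context {S T : Type} {BS : lisb S} {BT : lisb T} (M : mps BS BT).
Let ISG_S := lisb_inverse_semigroup BS.

Lemma alpha_lamB w x y :
  alpha M w (lamB BS x y) = lamB BS (alpha M w x) (alpha M (beta_inv M (alpha M w x) w) y).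
Proof. unfold lamB, lam_g. rewrite alpha_smul, alpha_sadd, <- sinv_alpha. reflexivity. Qed.

Lemma alpha_lamB_bar a u b :
  alpha M u (lamB BS (alpha_inv M u a) b) = lamB BS a (alpha M (beta_inv M a u) b).
Proof. rewrite alpha_lamB, alpha_alpha_inv. reflexivity. Qed.

Lemma rhoB_alpha w x y :
  let g := beta_inv M (alpha M w x) w in
  rhoB BS (alpha M g y) (alpha M w x) =
  alpha M (beta_inv M (alpha M g (sadd BS (sinv BS x) y)) g) (rhoB BS y x).
Proof.
  intro g. unfold rhoB, rho_g. rewrite sinv_alpha, <- alpha_sadd. fold g.
  set (z := sadd BS (sinv BS x) y).
  rewrite (sinv_alpha M g z), alpha_smul, <- sinv_alpha, <- beta_inv_smul_index,
    beta_inv_idempotent_id by apply (mul_inv_idempotent ISG_S).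
  reflexivity.
Qed.

Definition matched_rmap (t : (S * T) * (S * T)) : (S * T) * (S * T) :=
  let '((a, u), (b, v)) := t in
  let A := alpha M u (lamB BS (alpha_inv M u a) b) in
  let U := beta M a (lamB BT (beta_inv M a u) v) in
  ((A, U),
   (alpha_inv M (beta_inv M A U) (rhoB BS (alpha M (beta_inv M a u) b) a),
    beta_inv M (alpha_inv M U A) (rhoB BT (beta M (alpha_inv M u a) v) u))).

Lemma mp_rmap_snd_fst a u b v :
  fst (snd (rmap_g (mp_add BS BT) (mp_mul M) (mp_inv M) ((a, u), (b, v)))) =
  fst (snd (matched_rmap ((a, u), (b, v)))).
Proof.
  unfold rmap_g, rho_g, matched_rmap. cbn [fst snd].
  rewrite fst_mp_inv_mul. cbn [fst snd mp_add mp_inv].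
  pose proof (rhoB_alpha u (alpha_inv M u a) b) as Hrho. cbv zeta in Hrho.
  rewrite alpha_alpha_inv in Hrho. rewrite Hrho.
  unfold lamB at 1 2, lam_g at 1 2.
  rewrite (alpha_smul M u), alpha_alpha_inv, mps_cond2, beta_inv_mp_mul, alpha_inv_smul_index,
    alpha_inv_alpha.
  reflexivity.
Qed.

End LambdaRho.

Section MatchedRmap.
Context {S T : Type} {BS : lisb S} {BT : lisb T} (M : mps BS BT).

Lemma mp_rmap_eq t : rmap_g (mp_add BS BT) (mp_mul M) (mp_inv M) t = matched_rmap M t.
Proof.
  destruct t as [[a u] [b v]].
  apply injective_projections; [reflexivity | apply injective_projections].
  - apply mp_rmap_snd_fst.
  - exact (mp_rmap_snd_fst (mps_swap M) u a v b).
Qed.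

Lemma rmap_eq_matched_rmap (pinv : S * T -> S * T) :
  is_inverse_op (mp_mul M) pinv ->
  forall t, rmap_g (mp_add BS BT) (mp_mul M) pinv t = matched_rmap M t.
Proof.
  intros Hinv t. rewrite <- mp_rmap_eq. unfold rmap_g, lam_g, rho_g.
  rewrite !(mp_inverse_unique M pinv Hinv). reflexivity.
Qed.

End MatchedRmap.

Section TwistComponents.
Context {S T : Type} {BS : lisb S} {BT : lisb T} (M : mps BS BT).

(* [mp_mul_eq]: [(a, u) * q = (a * t1, u * t2)] where [(t1, t2) = mp_twist (a, u) q]. *)
Definition mp_twist (p q : S * T) : S * T :=
  (alpha M (beta_inv M (fst p) (snd p)) (fst q), beta M (alpha_inv M (snd p) (fst p)) (snd q)).

Lemma mp_twist_mul_idempotent_fst a u e f b v c w :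
  idempotent (smul BS) e -> idempotent (smul BT) f ->
  fst (mp_twist (mp_mul M (mp_mul M (a, u) (e, f)) (b, v)) (c, w)) =
  fst (mp_twist (mp_mul M (a, u) (b, v)) (c, w)).
Proof.
  intros He Hf. unfold mp_twist. rewrite !mp_mul_eq. cbn [fst snd].
  rewrite !beta_inv_mp_mul.
  rewrite (beta_inv_idempotent_id M (alpha M (beta_inv M a u) e)) by (apply alpha_idempotent, He).
  rewrite (beta_inv_idempotent_id M e) by exact He.
  rewrite (alpha_hom M (beta_inv M a u) f b), (alpha_idempotent_id M f b Hf).
  rewrite beta_inv_smul, alpha_inv_alpha, !alpha_hom.
  rewrite (alpha_idempotent_id M (beta_inv M _ f)) by (apply beta_inv_idempotent, Hf).
  reflexivity.
Qed.

Lemma mp_twist_matched_rmap_fst_fst a u b v c w :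
  fst (mp_twist (a, u) (fst (matched_rmap M ((b, v), (c, w))))) =
  fst (fst (prod_rmap (rB BS) (rB BT)
              (mp_twist (a, u) (b, v), mp_twist (mp_mul M (a, u) (b, v)) (c, w)))).
Proof.
  unfold mp_twist, matched_rmap. cbn [fst snd prod_rmap]. rewrite mp_mul_eq. cbn [fst snd].
  rewrite alpha_lamB_bar, alpha_lamB, beta_inv_mp_mul, alpha_hom. reflexivity.
Qed.

Lemma mp_twist_matched_rmap_snd_fst a u b v c w :
  fst (mp_twist (mp_mul M (a, u) (fst (matched_rmap M ((b, v), (c, w)))))
                (snd (matched_rmap M ((b, v), (c, w))))) =
  fst (snd (prod_rmap (rB BS) (rB BT)
              (mp_twist (a, u) (b, v), mp_twist (mp_mul M (a, u) (b, v)) (c, w)))).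
Proof.
  unfold mp_twist, matched_rmap. cbn [fst snd prod_rmap]. rewrite !mp_mul_eq. cbn [fst snd].
  rewrite !beta_inv_mp_mul, !alpha_hom, alpha_alpha_inv.
  change (snd (rB BS ?p)) with (rhoB BS (snd p) (fst p)). cbn [fst snd].
  pose proof (rhoB_alpha M (beta_inv M a u) b (alpha M (beta_inv M b v) c)) as Hrho.
  cbv zeta in Hrho.
  rewrite Hrho, alpha_lamB_bar. unfold lamB at 1, lam_g at 1.
  rewrite alpha_smul, beta_inv_smul_index. reflexivity.
Qed.

End TwistComponents.

Section Twist.
Context {S T : Type} {BS : lisb S} {BT : lisb T} (M : mps BS BT).
Let ISG_S := lisb_inverse_semigroup BS.
Let ISG_T := lisb_inverse_semigroup BT.
Let R := prod_rmap (rB BS) (rB BT).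

Lemma matched_rmap_fst p q : fst (matched_rmap M (p, q)) = fst (R (p, mp_twist M p q)).
Proof.
  destruct p as [a u], q as [b v]. apply injective_projections.
  - apply alpha_lamB_bar.
  - exact (alpha_lamB_bar (mps_swap M) u a v).
Qed.

Lemma mp_twist_matched_rmap p q :
  mp_twist M (fst (matched_rmap M (p, q))) (snd (matched_rmap M (p, q))) =
  snd (R (p, mp_twist M p q)).
Proof.
  destruct p as [a u], q as [b v]. unfold mp_twist, matched_rmap. cbn [fst snd].
  rewrite alpha_alpha_inv, beta_beta_inv. reflexivity.
Qed.

(* [lambda_p(q) * rho_q(p) = p * (x * x^-1) * q] with [x = p^-1 + q], and an idempotent factor
   does not change the twist. *)
Lemma mp_twist_mul_matched_rmap p q z :
  mp_twist M (mp_mul M (fst (matched_rmap M (p, q))) (snd (matched_rmap M (p, q)))) z =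
  mp_twist M (mp_mul M p q) z.
Proof.
  rewrite <- (mp_rmap_eq M (p, q)). unfold rmap_g, lam_g, rho_g. cbn [fst snd].
  set (x := mp_add BS BT (mp_inv M p) q).
  rewrite mp_mul_assoc, <- (mp_mul_assoc M p x (mp_inv M x)), mp_mul_mp_inv.
  destruct p as [a u], q as [b v], z as [c w]. apply injective_projections.
  - exact (mp_twist_mul_idempotent_fst M a u _ _ b v c w
             (mul_inv_idempotent ISG_S _) (mul_inv_idempotent ISG_T _)).
  - exact (mp_twist_mul_idempotent_fst (mps_swap M) u a _ _ v b w c
             (mul_inv_idempotent ISG_T _) (mul_inv_idempotent ISG_S _)).
Qed.

Lemma mp_twist_matched_rmap_fst p1 p2 p3 :
  mp_twist M p1 (fst (matched_rmap M (p2, p3))) =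
  fst (R (mp_twist M p1 p2, mp_twist M (mp_mul M p1 p2) p3)).
Proof.
  destruct p1 as [a u], p2 as [b v], p3 as [c w]. apply injective_projections.
  - apply mp_twist_matched_rmap_fst_fst.
  - exact (mp_twist_matched_rmap_fst_fst (mps_swap M) u a v b w c).
Qed.

Lemma mp_twist_mul_matched_rmap_snd p1 p2 p3 :
  mp_twist M (mp_mul M p1 (fst (matched_rmap M (p2, p3)))) (snd (matched_rmap M (p2, p3))) =
  snd (R (mp_twist M p1 p2, mp_twist M (mp_mul M p1 p2) p3)).
Proof.
  destruct p1 as [a u], p2 as [b v], p3 as [c w]. apply injective_projections.
  - apply mp_twist_matched_rmap_snd_fst.
  - exact (mp_twist_matched_rmap_snd_fst (mps_swap M) u a v b w c).
Qed.

Definition mp_twist3 (t : (S * T) * (S * T) * (S * T)) : (S * T) * (S * T) * (S * T) :=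
  let '(x, y, z) := t in (x, mp_twist M x y, mp_twist M (mp_mul M x y) z).

Lemma mp_twist3_r12 t : mp_twist3 (r12 (matched_rmap M) t) = r12 R (mp_twist3 t).
Proof.
  destruct t as [[x y] z]. rewrite r12_eq. cbn [mp_twist3]. rewrite r12_eq.
  rewrite mp_twist_mul_matched_rmap, mp_twist_matched_rmap, matched_rmap_fst. reflexivity.
Qed.

Lemma mp_twist3_r23 t : mp_twist3 (r23 (matched_rmap M) t) = r23 R (mp_twist3 t).
Proof.
  destruct t as [[x y] z]. rewrite r23_eq. cbn [mp_twist3]. rewrite r23_eq.
  rewrite mp_twist_matched_rmap_fst, mp_twist_mul_matched_rmap_snd. reflexivity.
Qed.

Lemma mp_twist_inj p y y' : mp_twist M p y = mp_twist M p y' -> y = y'.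
Proof.
  destruct y as [b v], y' as [b' v']. unfold mp_twist; cbn [fst snd]. intro H.
  injection H as Hb Hv. apply alpha_inj in Hb. apply beta_inj in Hv. subst. reflexivity.
Qed.

Lemma mp_twist3_inj t t' : mp_twist3 t = mp_twist3 t' -> t = t'.
Proof.
  destruct t as [[x y] z], t' as [[x' y'] z']. cbn [mp_twist3]. intro H.
  assert (Hx := f_equal (fun t => fst (fst t)) H).
  assert (Hy := f_equal (fun t => snd (fst t)) H).
  assert (Hz := f_equal snd H).
  cbn [fst snd] in Hx, Hy, Hz. subst x'.
  apply mp_twist_inj in Hy. subst y'. apply mp_twist_inj in Hz. subst z'. reflexivity.
Qed.

Lemma matched_rmap_solution :
  is_solution (rB BS) -> is_solution (rB BT) -> is_solution (matched_rmap M).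
Proof.
  intros HS HT. apply (is_solution_intertwined (matched_rmap M) R mp_twist3).
  - exact mp_twist3_inj.
  - exact mp_twist3_r12.
  - exact mp_twist3_r23.
  - exact (prod_rmap_solution _ _ HS HT).
Qed.

End Twist.

Theorem theorem28 (S T : Type) (BS : lisb S) (BT : lisb T) (M : mps BS BT) :
  is_solution (rB BS) -> is_solution (rB BT) ->
  forall pinv : S * T -> S * T,
    is_inverse_op (mp_mul M) pinv ->
    is_solution (rmap_g (mp_add BS BT) (mp_mul M) pinv) /\
    (forall (a b : S) (u v : T),
      let abar := alpha_inv M u a in
      let ubar := beta_inv M a u in
      let A := alpha M u (lamB BS abar b) in
      let U := beta M a (lamB BT ubar v) in
      let Abar := alpha_inv M U A in
      let Ubar := beta_inv M A U in
      rmap_g (mp_add BS BT) (mp_mul M) pinv ((a, u), (b, v)) =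
      ((A, U),
       (alpha_inv M Ubar (rhoB BS (alpha M ubar b) a),
        beta_inv M Abar (rhoB BT (beta M abar v) u)))).
Proof.
  intros HS HT pinv Hinv. split.
  - apply (is_solution_ext _ (matched_rmap M)).
    + exact (rmap_eq_matched_rmap M pinv Hinv).
    + exact (matched_rmap_solution M HS HT).
  - intros a b u v. cbv zeta. rewrite (rmap_eq_matched_rmap M pinv Hinv). reflexivity.
Qed.
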